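(* Let $\theta\in\mathbb{K}\setminus\{0\}$ and let $(A,P)$ be a complete filtered Rota--Baxter algebra of weight $\theta$ over a field $\mathbb{K}$ of characteristic zero; put $\tilde P:=\theta\,\mathrm{id}_A-P$. Let $\chi_\theta:A_1\to A_1$ be the map defined by $$\chi_\theta(a)=a-\frac1\theta\,\mathrm{BCH}\Big(P\big(\chi_\theta(a)\big),\tilde P\big(\chi_\theta(a)\big)\Big),\qquad a\in A_1.$$ Then for all $a\in A_1$: (1) $\chi_\theta(a)=a+\frac1\theta\,\mathrm{BCH}\big(-P(\chi_\theta(a)),\theta a\big)$; (2) $\exp(\theta a)=\exp\big(P(\chi_\theta(a))\big)\exp\big(\tilde P(\chi_\theta(a))\big)$; (3) with $b\in A$ defined by $1+\theta b:=\exp(\theta a)$, the elements $x:=\exp\big(P(\chi_\theta(a))\big)^{-1}$ and $x':=\exp\big(\tilde P(\chi_\theta(a))\big)^{-1}$ are the unique solutions of the equations $x=1-P(x\,b)$ and $x'=1-\tilde P(b\,x')$ respectively.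
   Context: A Rota--Baxter algebra of weight $\theta$ is an associative $\mathbb{K}$-algebra $A$ with a linear map $P:A\to A$ satisfying $P(x)P(y)+\theta P(xy)=P(xP(y))+P(P(x)y)$ for all $x,y\in A$. A Rota--Baxter ideal is an ideal $I$ with $P(I)\subseteq I$. A complete filtered Rota--Baxter algebra is a Rota--Baxter algebra $(A,P)$ with a decreasing filtration $A=A_0\supseteq A_1\supseteq\cdots$ by Rota--Baxter ideals such that $A_mA_n\subseteq A_{m+n}$ and $A\cong\varprojlim A/A_n$. $\exp$ and $\log$ are the usual series, mutually inverse bijections between $A_1$ and $1+A_1$. $\mathrm{BCH}(x,y)$ is the Baker--Campbell--Hausdorff series, $\exp(x)\exp(y)=\exp(x+y+\mathrm{BCH}(x,y))$. The map $\chi_\theta$ is the unique map $A_1\to A_1$ satisfying the displayed fixed-point equation (obtained as the limit, in the filtration topology, of the iteration starting from $a$). *)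

From HB Require Import structures.
From mathcomp Require Import all_boot all_order all_algebra.
From Stdlib Require Import ClassicalEpsilon.
Set Implicit Arguments. Unset Strict Implicit. Unset Printing Implicit Defensive.
Import Order.TTheory GRing.Theory.
Local Open Scope ring_scope.

Section FilteredRB.
Variables (K : fieldType) (A : unitAlgType K) (F : nat -> {pred A}).

Definition rota_baxter (theta : K) (P : A -> A) : Prop :=
  forall x y : A, P x * P y + theta *: P (x * y) = P (x * P y) + P (P x * y).

Definition rb_filtration (P : A -> A) : Prop :=
  (forall x, x \in F 0) /\
  [/\ forall n x, x \in F n.+1 -> x \in F n,
      forall n, 0 \in F n /\ (forall x y, x \in F n -> y \in F n -> x + y \in F n),
      forall n a x, x \in F n -> (a * x \in F n) /\ (x * a \in F n),
      forall n x, x \in F n -> P x \in F n &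
      forall m n x y, x \in F m -> y \in F n -> x * y \in F (m + n)].

(* A ≅ lim A/F n : the canonical map A -> lim A / F n is injective
   (separated) and surjective (every compatible sequence of residues lifts). *)
Definition filt_complete : Prop :=
  (forall x, (forall n, x \in F n) -> x = 0) /\
  (forall u : nat -> A, (forall n, u n.+1 - u n \in F n) ->
     exists y, forall n, y - u n \in F n).

Definition filt_lim (u : nat -> A) (y : A) : Prop :=
  forall n, exists N, forall m, (N <= m)%N -> u m - y \in F n.

(* the limit (chosen classically; unique when F is separated) *)
Definition flim (u : nat -> A) : A := epsilon (inhabits 0) (filt_lim u).

Definition fexp (x : A) : A :=
  flim (fun n => \sum_(k < n) (k`!%:R)^-1 *: x ^+ k).

Definition flog (x : A) : A :=
  flim (fun n => \sum_(k < n) ((-1) ^+ k / k.+1%:R) *: (x - 1) ^+ k.+1).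

Definition BCH (x y : A) : A := flog (fexp x * fexp y) - x - y.

Definition Ptilde (theta : K) (P : A -> A) (x : A) : A := theta *: x - P x.

Definition chi_step (theta : K) (P : A -> A) (a c : A) : A :=
  a - theta^-1 *: BCH (P c) (Ptilde theta P c).

Definition chi (theta : K) (P : A -> A) (a : A) : A :=
  flim (fun n => iter n (chi_step theta P a) a).

End FilteredRB.

(* The iteration defining chi contracts in the filtration topology, because
   BCH of arguments that agree modulo F n agree modulo F (n + 1).  Its limit c
   thus satisfies c = a - BCH (P c) (P~ c) / theta, and as P c + P~ c = theta c
   this says theta a = log (exp (P c) exp (P~ c)), which is (2); multiplying by
   exp (- P c) inside the logarithm gives (1).
   Induction on k with the Rota-Baxter identity gives
   P ((P~ u)^k - (- P u)^k) = - theta (- P u)^k, hence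
   P (exp (P~ u) - exp (- P u)) = - theta (exp (- P u) - 1); for u = c this is
   the equation x = 1 - P (x b), and the equation for x' is the same statement
   for the weight-theta Rota-Baxter operator P~, whose own tilde is P.  Both
   equations have at most one solution since y |-> 1 - P (y b) is a contraction.
   exp and log are inverse to each other on F 1 because exp (- X) exp X = 1 and
   log (exp X) = X hold modulo X^N for the truncated series in K[X] (proved by
   differentiating, which is where characteristic zero is used), and these
   polynomial identities can be evaluated at any element of F 1. *)

From HB Require Import structures.
From mathcomp Require Import all_boot all_order all_algebra ring.
From Stdlib Require Import ClassicalEpsilon.
Set Implicit Arguments. Unset Strict Implicit. Unset Printing Implicit Defensive.
Import GRing.Theory.
Local Open Scope ring_scope.

Definition tseries (K : fieldType) (R : lalgType K) (c : nat -> K) (N : nat)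
    (x : R) : R :=
  \sum_(k < N) c k *: x ^+ k.

Definition exp_coef (K : fieldType) (k : nat) : K := (k`!%:R)^-1.

Definition log_coef (K : fieldType) (k : nat) : K :=
  if k is j.+1 then (-1) ^+ j / k%:R else 0.

Section PowerSeries.
Variables (K : fieldType) (R : lalgType K) (c : nat -> K).

Lemma tseriesSr N (x : R) : tseries c N.+1 x = tseries c N x + c N *: x ^+ N.
Proof. by rewrite /tseries big_ord_recr. Qed.

Lemma tseriesSl N (x : R) :
  tseries c N.+1 x = c 0%N *: 1 + \sum_(k < N) c k.+1 *: x ^+ k.+1.
Proof. by rewrite /tseries big_ord_recl expr0. Qed.

Lemma tseries1 (x : R) : tseries c 1 x = c 0%N *: 1.
Proof. by rewrite tseriesSl big_ord0 addr0. Qed.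

Lemma eq_tseries (c' : nat -> K) N (x : R) :
  c =1 c' -> tseries c N x = tseries c' N x.
Proof. by move=> eq_c; apply: eq_bigr => k _; rewrite eq_c. Qed.

Lemma tseriesB N (x y : R) :
  tseries c N x - tseries c N y = \sum_(k < N) c k *: (x ^+ k - y ^+ k).
Proof. by rewrite /tseries -sumrB; apply: eq_bigr => k _; rewrite scalerBr. Qed.

End PowerSeries.

Section FormalIdentities.
Variables (K : fieldType) (charK0 : [pchar K] =i pred0).

Lemma natrS_neq0 n : (n.+1%:R : K) != 0.
Proof. by have /pcharf0P -> := charK0. Qed.

Lemma deriv_tseries (c : nat -> K) N (p : {poly K}) :
  (tseries c N.+1 p)^`() = p^`() * tseries (fun k => c k.+1 *+ k.+1) N p.
Proof.
rewrite tseriesSl derivD alg_polyC derivC add0r raddf_sum mulr_sumr.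
apply: eq_bigr => k _; rewrite /= derivZ deriv_exp -scalerMnl scalerMnr.
by rewrite -scalerAr mulrnAr.
Qed.

Lemma exp_coef_deriv k : exp_coef K k.+1 *+ k.+1 = exp_coef K k.
Proof.
rewrite /exp_coef factS natrM invfM -mulrnAl -[_ *+ _]mulr_natr.
by rewrite mulVf ?mul1r ?natrS_neq0.
Qed.

Lemma log_coef_deriv k : log_coef K k.+1 *+ k.+1 = (-1) ^+ k.
Proof. by rewrite /log_coef -[_ *+ _]mulr_natr mulfVK ?natrS_neq0. Qed.

Lemma dvdXnP m (g : {poly K}) :
  reflect (forall i, (i < m)%N -> g`_i = 0) ('X^m %| g).
Proof.
rewrite /dvdp -Pdiv.IdomainMonic.take_poly_modp.
apply: (iffP eqP) => [g0 i lt_im | g0].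
  by move: (coef_take_poly m g i); rewrite g0 coef0 lt_im => <-.
by apply/polyP => i; rewrite coef_take_poly coef0; case: ltnP => // /g0.
Qed.

Lemma dvdXn_deriv m (g : {poly K}) : 'X^m %| g^`() -> 'X %| g -> 'X^(m.+1) %| g.
Proof.
move=> /dvdXnP dg /(@dvdXnP 1) g0; apply/dvdXnP => -[_|i lt_im]; first exact: g0.
have /eqP := dg i lt_im; rewrite coef_deriv -mulr_natr mulf_eq0.
by rewrite (negPf (natrS_neq0 _)) orbF => /eqP.
Qed.

Lemma dvdX_tseries (c : nat -> K) N (p : {poly K}) :
  'X %| p -> 'X %| tseries c N.+1 p - (c 0%N)%:P.
Proof.
move=> Xp; rewrite tseriesSl alg_polyC [_%:P + _]addrC addrK.
apply: (big_ind (fun q => 'X %| q)) => [|q r|k _]; [exact: dvdp0|exact: dvdp_add|].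
by rewrite -mul_polyC dvdp_mull // exprS dvdp_mulr.
Qed.

Lemma dvdXn_exp_tseriesN N :
  'X^N %| tseries (@exp_coef K) N (- 'X) * tseries (@exp_coef K) N 'X - 1.
Proof.
case: N => [|n]; first exact: dvd1p.
have expS := tseriesSr (@exp_coef K) n.
apply: dvdXn_deriv.
  rewrite derivB -polyC1 derivC subr0 derivM !deriv_tseries derivN derivX.
  rewrite !(eq_tseries _ _ exp_coef_deriv) !expS -!mul_polyC.
  set u := tseries _ n (- 'X); set v := tseries _ n 'X; set e := _%:P.
  have -> : (-1 * u) * (v + e * 'X^n) + (u + e * (- 'X) ^+ n) * (1 * v)
     = (- (u * e)) * 'X^n + (e * v) * (- 'X) ^+ n by ring.
  by rewrite dvdp_add ?dvdp_mull // exprNn dvdp_mull.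
have Xexp p : 'X %| p -> 'X %| tseries (@exp_coef K) n.+1 p - 1.
  by move=> Xp; have := dvdX_tseries (@exp_coef K) n Xp; rewrite /exp_coef invr1.
have := Xexp _ (dvdpp 'X); have := Xexp (- 'X); rewrite dvdpNr dvdpp => /(_ isT).
set u := tseries _ n.+1 (- 'X); set v := tseries _ n.+1 'X => Xu Xv.
have -> : u * v - 1 = (u - 1) * (v - 1) + (u - 1) + (v - 1) by ring.
by rewrite dvdp_addl // dvdp_addl // dvdp_mulr.
Qed.

Lemma dvdXn_log_tseries_exp N :
  'X^N %| tseries (@log_coef K) N (tseries (@exp_coef K) N 'X - 1) - 'X.
Proof.
case: N => [|n]; first exact: dvd1p.
set e := tseries _ n.+1 'X - 1.
have Xe : 'X %| e.
  by have := dvdX_tseries (@exp_coef K) n (dvdpp 'X); rewrite /exp_coef invr1.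
apply: dvdXn_deriv; last first.
  by apply: dvdp_sub (dvdpp 'X); have := dvdX_tseries (@log_coef K) n Xe; rewrite subr0.
have de : e^`() = 1 + e - (exp_coef K n)%:P * 'X^n.
  rewrite /e derivB -polyC1 derivC subr0 deriv_tseries derivX mul1r.
  rewrite (eq_tseries _ _ exp_coef_deriv) tseriesSr mul_polyC; ring.
set G := tseries (fun k => (-1) ^+ k) n e.
have geom : (1 + e) * G = 1 - (- e) ^+ n.
  have -> : G = \sum_(i < n) (- e) ^+ i.
    by apply: eq_bigr => i _; rewrite -scaleN1r exprZn.
  by rewrite -[1 - _]opprB subrX1; ring.
rewrite derivB derivX deriv_tseries (eq_tseries _ _ log_coef_deriv) -/G de.
have -> : (1 + e - (exp_coef K n)%:P * 'X^n) * G - 1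
    = - (- e) ^+ n - (exp_coef K n)%:P * G * 'X^n.
  by rewrite mulrBl geom; ring.
by rewrite dvdp_sub ?dvdp_mull // dvdpNr dvdp_exp2r // dvdpNr.
Qed.

End FormalIdentities.

Lemma subr_eq_sub (V : zmodType) (a b c d : V) : a + b = c + d -> b - c = d - a.
Proof. by move=> e; rewrite -[b](addKr a) e addrCA addrAC subrr add0r addrC. Qed.

Lemma subrXS (R : pzRingType) (t q : R) k :
  t ^+ k.+1 - q ^+ k.+1 = (t ^+ k - q ^+ k) * t + q ^+ k * (t - q).
Proof. by rewrite mulrBl mulrBr addrA subrK -!exprSr. Qed.

Section RotaBaxter.
Variables (K : fieldType) (A : unitAlgType K) (theta : K) (P : {linear A -> A}).

Lemma Ptilde_is_linear : linear (Ptilde theta P).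
Proof.
move=> r x y; rewrite /Ptilde linearP scalerDr scalerBr !scalerA [theta * r]mulrC.
by rewrite opprD addrACA.
Qed.

HB.instance Definition _ :=
  GRing.isLinear.Build K A A *:%R (Ptilde theta P) Ptilde_is_linear.

Local Notation Pt := (Ptilde theta P).

Lemma PtildeK x : Ptilde theta (Ptilde theta P) x = P x.
Proof. by rewrite /Ptilde opprB subrKC. Qed.

Lemma rota_baxter_Ptilde : rota_baxter theta P -> rota_baxter theta (Ptilde theta P).
Proof.
move=> RB x y.
set w := theta *: (x * y) - x * P y - P x * y.
have RBw : P x * P y + P w = 0.
  by rewrite !linearB linearZ /= !addrA RB addrAC addrK subrr.
have mulPt : Pt x * Pt y = Pt w.
  have -> : Pt x * Pt y = theta *: w + P x * P y.
    rewrite /Ptilde /w mulrBl !mulrBr -!scalerAl -!scalerAr !scalerBr scalerA.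
    by rewrite [in LHS]opprB [in LHS]addrA [in LHS]addrAC.
  by rewrite /Ptilde; congr (_ + _); apply/eqP; rewrite -addr_eq0 RBw.
have -> : x * Pt y = theta *: (x * y) - x * P y by rewrite /Ptilde mulrBr scalerAr.
have -> : Pt x * y = theta *: (x * y) - P x * y by rewrite /Ptilde mulrBl scalerAl.
by rewrite mulPt /w !(raddfB Pt) /= linearZ [in LHS]addrAC [in RHS]addrA.
Qed.

Lemma rota_baxter_pow u k : rota_baxter theta P ->
  P (Pt u ^+ k.+1 - (- P u) ^+ k.+1) = - theta *: (- P u) ^+ k.+1.
Proof.
move=> RB; have Pt_sub : Pt u - (- P u) = theta *: u by rewrite /Ptilde opprK subrK.
have P_mulPt d : P (d * Pt u) = P (P d * u) - P d * P u.
  rewrite /Ptilde mulrBr -scalerAr linearB linearZ /=.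
  by apply: subr_eq_sub; rewrite RB.
elim: k => [|k IH]; first by rewrite !expr1 Pt_sub linearZ /= scaleNr scalerN opprK.
have -> : P (Pt u ^+ k.+2 - (- P u) ^+ k.+2) =
    P ((Pt u ^+ k.+1 - (- P u) ^+ k.+1) * Pt u) + theta *: P ((- P u) ^+ k.+1 * u).
  by rewrite subrXS Pt_sub linearD -linearZ scalerAr.
have P_scal : P ((- theta *: (- P u) ^+ k.+1) * u) = - theta *: P ((- P u) ^+ k.+1 * u).
  by rewrite -linearZ scalerAl.
rewrite P_mulPt IH P_scal -scalerAl [in RHS]exprSr mulrN !scaleNr scalerN !opprK.
by rewrite addrAC addNr add0r.
Qed.

Lemma rota_baxter_tseries (c : nat -> K) N u : rota_baxter theta P ->
  P (tseries c N.+1 (Pt u) - tseries c N.+1 (- P u)) =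
  - theta *: (tseries c N.+1 (- P u) - c 0%N *: 1).
Proof.
move=> RB; rewrite tseriesB linear_sum big_ord_recl /= !expr0 subrr scaler0 linear0 add0r.
rewrite tseriesSl [c 0%N *: 1 + _]addrC addrK scaler_sumr; apply: eq_bigr => k _.
by rewrite linearZ /= rota_baxter_pow // !scalerA mulrC.
Qed.

End RotaBaxter.

Record complete_filtration (K : fieldType) (A : unitAlgType K)
    (F : nat -> {pred A}) : Prop := {
  filtT : forall x, x \in F 0%N;
  filtS : forall n x, x \in F n.+1 -> x \in F n;
  filt0 : forall n, 0 \in F n;
  filtD : forall n x y, x \in F n -> y \in F n -> x + y \in F n;
  filtM : forall m n x y, x \in F m -> y \in F n -> x * y \in F (m + n)%N;
  filt_sep : forall x, (forall n, x \in F n) -> x = 0;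
  filt_cauchy : forall u : nat -> A, (forall n, u n.+1 - u n \in F n) ->
    exists y, forall n, y - u n \in F n }.

Lemma rb_filtration_complete (K : fieldType) (A : unitAlgType K)
    (F : nat -> {pred A}) (P : A -> A) :
  rb_filtration F P -> filt_complete F -> complete_filtration F.
Proof.
by move=> [FT [FS F0D _ _ FM]] [Fsep Fcauchy]; split=> // n; have [] := F0D n.
Qed.

Section Filtration.
Variables (K : fieldType) (A : unitAlgType K) (F : nat -> {pred A}).
Hypothesis hF : complete_filtration F.

Lemma filtMl n a x : x \in F n -> a * x \in F n.
Proof. by move=> Fx; rewrite -[n]add0n (filtM hF (filtT hF a)). Qed.

Lemma filtMr n a x : x \in F n -> x * a \in F n.
Proof. by move=> Fx; rewrite -[n]addn0 (filtM hF Fx (filtT hF a)). Qed.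

Lemma filtN n x : x \in F n -> - x \in F n.
Proof. by move=> Fx; rewrite -mulN1r filtMl. Qed.

Lemma filtB n x y : x \in F n -> y \in F n -> x - y \in F n.
Proof. by move=> Fx Fy; rewrite (filtD hF) ?filtN. Qed.

Lemma filtZ n (r : K) x : x \in F n -> r *: x \in F n.
Proof. by move=> Fx; rewrite -mulr_algl filtMl. Qed.

Lemma filt_sum n (I : Type) (r : seq I) (P : pred I) (f : I -> A) :
  (forall i, P i -> f i \in F n) -> \sum_(i <- r | P i) f i \in F n.
Proof.
by move=> Ff; apply: (big_ind (fun y => y \in F n)) => //; [exact: filt0 | exact: filtD].
Qed.

Lemma filtW m n x : (m <= n)%N -> x \in F n -> x \in F m.
Proof.
move=> /subnK <-; elim: (n - m)%N => [|d IH] Fx //.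
by apply/IH/(filtS hF); rewrite -addSn.
Qed.

Lemma filtX x k : x \in F 1 -> x ^+ k \in F k.
Proof.
move=> Fx; elim: k => [|k IH]; first exact: filtT.
by rewrite exprS -add1n (filtM hF).
Qed.

Definition eqF n (x y : A) := x - y \in F n.

Lemma eqFT x y : eqF 0 x y.
Proof. exact: filtT. Qed.

Lemma eqF0 n x : eqF n x 0 = (x \in F n).
Proof. by rewrite /eqF subr0. Qed.

Lemma eqF_refl n x : eqF n x x.
Proof. by rewrite /eqF subrr (filt0 hF). Qed.

Lemma eqF_sym n x y : eqF n x y -> eqF n y x.
Proof. by rewrite /eqF -opprB => /filtN; rewrite opprK. Qed.

Lemma eqF_trans n x y z : eqF n x y -> eqF n y z -> eqF n x z.
Proof. by move=> xy yz; have := filtD hF xy yz; rewrite addrA subrK. Qed.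

Lemma eqFW m n x y : (m <= n)%N -> eqF n x y -> eqF m x y.
Proof. exact: filtW. Qed.

Lemma eqFD n x y x' y' : eqF n x y -> eqF n x' y' -> eqF n (x + x') (y + y').
Proof. by move=> xy xy'; have := filtD hF xy xy'; rewrite /eqF opprD addrACA. Qed.

Lemma eqFN n x y : eqF n x y -> eqF n (- x) (- y).
Proof. by rewrite /eqF -opprD => /filtN. Qed.

Lemma eqFB n x y x' y' : eqF n x y -> eqF n x' y' -> eqF n (x - x') (y - y').
Proof. by move=> xy /eqFN; apply: eqFD. Qed.

Lemma eqFZ n (r : K) x y : eqF n x y -> eqF n (r *: x) (r *: y).
Proof. by rewrite /eqF -scalerBr => /filtZ. Qed.

Lemma eqFM n x y x' y' : eqF n x y -> eqF n x' y' -> eqF n (x * x') (y * y').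
Proof.
move=> xy xy'; apply: (@eqF_trans _ _ (y * x')).
  by rewrite /eqF -mulrBl filtMr.
by rewrite /eqF -mulrBr filtMl.
Qed.

Lemma eqFX n x y k : eqF n x y -> eqF n (x ^+ k) (y ^+ k).
Proof.
by move=> xy; elim: k => [|k IH]; rewrite ?eqF_refl // !exprS eqFM.
Qed.

Lemma eqF_sep x y : (forall n, eqF n x y) -> x = y.
Proof. by move=> xy; apply/eqP; rewrite -subr_eq0; apply/eqP/(filt_sep hF). Qed.

Lemma eqF_sub_swap n a a' b b' : eqF n (a - a') (b - b') -> eqF n (a - b) (a' - b').
Proof. by rewrite /eqF [in X in _ -> X]opprD [in X in _ -> X]addrACA -opprD. Qed.

Lemma flimE u y : (forall n, eqF n y (u n)) -> flim F u = y.
Proof.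
move=> uy; have lim_y : filt_lim F u y.
  by move=> n; exists n => m le_nm; apply/eqF_sym/(eqFW le_nm).
have lim_u : filt_lim F u (flim F u) :=
  epsilon_spec (inhabits 0) _ (ex_intro _ y lim_y).
apply: eqF_sep => n; have [N uN] := lim_u n; have [M uM] := lim_y n.
apply: (@eqF_trans _ _ (u (maxn N M))); last exact: uM (leq_maxr _ _).
exact/eqF_sym/uN/leq_maxl.
Qed.

Lemma flim_cauchy u : (forall n, eqF n (u n.+1) (u n)) ->
  forall n, eqF n (flim F u) (u n).
Proof. by move=> /(filt_cauchy hF) [y uy]; rewrite (flimE uy). Qed.

Definition contractive m (h : A -> A) :=
  forall n x y, x \in F m -> y \in F m -> eqF n x y -> eqF n.+1 (h x) (h y).

Lemma contractive_fixed_unique m h x y : contractive m h ->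
  x \in F m -> y \in F m -> h x = x -> h y = y -> x = y.
Proof.
move=> h_contr Fx Fy hx hy; apply: eqF_sep; elim=> [|n IH]; first exact: eqFT.
by rewrite -hx -hy; apply: h_contr.
Qed.

Lemma contractive_iter_fixed m h a :
  contractive m h -> (forall x, x \in F m -> h x \in F m) -> a \in F m ->
  let c := flim F (fun n => iter n h a) in c \in F m /\ h c = c.
Proof.
move=> h_contr hFm Fa c.
have Fiter n : iter n h a \in F m by elim: n => //= n; apply: hFm.
have cauchy n : eqF n (iter n.+1 h a) (iter n h a).
  by elim: n => [|n IH]; [exact: eqFT | exact: h_contr (Fiter _) (Fiter _) IH].
have tail := flim_cauchy cauchy.
have Fc : c \in F m by have := filtD hF (tail m) (Fiter m); rewrite subrK.
split=> //; apply: eqF_sep => -[|n]; first exact: eqFT.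
apply: (@eqF_trans _ _ (iter n.+1 h a)); last exact/eqF_sym/tail.
exact: h_contr Fc (Fiter n) (tail n).
Qed.

Lemma eqF_powS k j x y : x \in F 1 -> y \in F 1 -> eqF k x y ->
  eqF (k + j)%N (x ^+ j.+1) (y ^+ j.+1).
Proof.
move=> Fx Fy xy; elim: j => [|j IH]; rewrite /eqF; first by rewrite addn0 !expr1.
have -> : x ^+ j.+2 - y ^+ j.+2 = x * (x ^+ j.+1 - y ^+ j.+1) + (x - y) * y ^+ j.+1.
  by rewrite mulrBr mulrBl !exprS addrA subrK.
apply: (filtD hF); first by rewrite addnS -[(k + j).+1]add1n (filtM hF Fx IH).
exact: (filtM hF xy (filtX j.+1 Fy)).
Qed.

Lemma eqF_tseries n c N x y : eqF n x y -> eqF n (tseries c N x) (tseries c N y).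
Proof. by move=> xy; rewrite /eqF tseriesB; apply: filt_sum => k _; apply/filtZ/eqFX. Qed.

Definition fseries (c : nat -> K) (x : A) : A := flim F (fun n => tseries c n x).

Lemma fseries_trunc c N x : x \in F 1 -> eqF N (fseries c x) (tseries c N x).
Proof.
move=> Fx; apply: flim_cauchy => n.
by rewrite /eqF tseriesSr addrC addKr filtZ ?filtX.
Qed.

Lemma fseries_lipschitz c k x y : x \in F 1 -> y \in F 1 -> eqF k x y ->
  eqF k.+1 (fseries c x - fseries c y) (c 1%N *: (x - y)).
Proof.
move=> Fx Fy xy; apply: (@eqF_trans _ _ (tseries c k.+2 x - tseries c k.+2 y)).
  by apply: eqFB; apply: eqFW (leqnSn _) (fseries_trunc _ _ _).
rewrite tseriesB big_ord_recl big_ord_recl /= !expr0 !expr1 subrr scaler0 add0r.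
rewrite -[X in eqF _ _ X]addr0; apply: eqFD; first exact: eqF_refl.
rewrite eqF0; apply: filt_sum => i _; apply: filtZ.
by apply: eqFW (eqF_powS i.+1 Fx Fy xy); rewrite addnS ltnS leq_addr.
Qed.

Lemma flogE y : eqF 1 y 1 -> flog F y = fseries (@log_coef K) (y - 1).
Proof.
move=> Fy; apply: flimE => n.
have -> : \sum_(k < n) ((-1) ^+ k / k.+1%:R) *: (y - 1) ^+ k.+1 =
    tseries (@log_coef K) n.+1 (y - 1) by rewrite tseriesSl scale0r add0r.
exact: eqFW (leqnSn n) (fseries_trunc _ _ Fy).
Qed.

Lemma fexp_trunc N x : x \in F 1 -> eqF N (fexp F x) (tseries (@exp_coef K) N x).
Proof. exact: fseries_trunc. Qed.

Lemma fexp1 x : x \in F 1 -> eqF 1 (fexp F x) 1.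
Proof. by move=> /(fexp_trunc 1); rewrite tseries1 /exp_coef invr1 scale1r. Qed.

Lemma flog_F1 y : eqF 1 y 1 -> flog F y \in F 1.
Proof.
move=> Fy; rewrite flogE // -eqF0.
by have := fseries_trunc (@log_coef K) 1 Fy; rewrite tseries1 scale0r.
Qed.

Lemma fexp_lipschitz k x y : x \in F 1 -> y \in F 1 -> eqF k x y ->
  eqF k.+1 (fexp F x - fexp F y) (x - y).
Proof.
by move=> Fx Fy /(fseries_lipschitz (@exp_coef K) Fx Fy); rewrite /exp_coef invr1 scale1r.
Qed.

Lemma flog_lipschitz k y z : eqF 1 y 1 -> eqF 1 z 1 -> eqF k y z ->
  eqF k.+1 (flog F y - flog F z) (y - z).
Proof.
move=> Fy Fz yz; rewrite !flogE //.
have := fseries_lipschitz (@log_coef K) Fy Fz (eqFB yz (eqF_refl k 1)).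
by rewrite /log_coef expr0 mul1r invr1 scale1r opprB addrA subrK.
Qed.

Lemma horner_alg_tseries (x : A) (c : nat -> K) N p :
  horner_alg x (tseries c N p) = tseries c N (horner_alg x p).
Proof.
by rewrite linear_sum; apply: eq_bigr => k _; rewrite linearZ /= rmorphXn mulr_algl.
Qed.

Lemma horner_alg_dvdXn m x g : x \in F 1 -> 'X^m %| g -> horner_alg x g \in F m.
Proof.
move=> Fx /divpK <-; rewrite rmorphM rmorphXn /= horner_algX -[m]add0n.
exact: (filtM hF (filtT hF _) (filtX m Fx)).
Qed.

Hypothesis charK0 : [pchar K] =i pred0.

Lemma fexpN_mul x : x \in F 1 -> fexp F (- x) * fexp F x = 1.
Proof.
move=> Fx; apply: eqF_sep => N.
apply: (@eqF_trans _ _ (tseries (@exp_coef K) N (- x) * tseries (@exp_coef K) N x)).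
  by apply: eqFM; apply: fexp_trunc; rewrite ?filtN.
have := horner_alg_dvdXn Fx (dvdXn_exp_tseriesN charK0 N).
by rewrite rmorphB rmorphM rmorph1 /= !horner_alg_tseries rmorphN /= horner_algX.
Qed.

Lemma fexp_mulN x : x \in F 1 -> fexp F x * fexp F (- x) = 1.
Proof. by move=> Fx; rewrite -{1}[x]opprK fexpN_mul ?filtN. Qed.

Lemma fexp_unit x : x \in F 1 -> fexp F x \is a GRing.unit.
Proof.
by move=> Fx; apply/unitrP; exists (fexp F (- x)); rewrite fexpN_mul ?fexp_mulN.
Qed.

Lemma fexpV x : x \in F 1 -> (fexp F x)^-1 = fexp F (- x).
Proof. by move=> Fx; rewrite -[LHS]mul1r -(fexpN_mul Fx) mulrK ?fexp_unit. Qed.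

Lemma flog_exp x : x \in F 1 -> flog F (fexp F x) = x.
Proof.
move=> Fx; have Fe := fexp1 Fx; rewrite flogE //; apply: eqF_sep => N.
apply: (eqF_trans (fseries_trunc _ N Fe)).
apply: (@eqF_trans _ _ (tseries (@log_coef K) N (tseries (@exp_coef K) N x - 1))).
  by apply/eqF_tseries/eqFB; [exact: fexp_trunc | exact: eqF_refl].
have := horner_alg_dvdXn Fx (dvdXn_log_tseries_exp charK0 N).
rewrite rmorphB /= horner_alg_tseries rmorphB rmorph1 /=.
by rewrite horner_alg_tseries horner_algX.
Qed.

Lemma flog_inj y z : eqF 1 y 1 -> eqF 1 z 1 -> flog F y = flog F z -> y = z.
Proof.
move=> Fy Fz yz; apply: eqF_sep; elim=> [|n IH]; first exact: eqFT.
have := flog_lipschitz Fy Fz IH; rewrite yz subrr.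
by move/eqF_sym; rewrite eqF0.
Qed.

Lemma fexp_log y : eqF 1 y 1 -> fexp F (flog F y) = y.
Proof.
move=> Fy; have Fl := flog_F1 Fy.
by apply: flog_inj; rewrite ?fexp1 ?flog_exp.
Qed.

Lemma fexp_eqF k x y : x \in F 1 -> y \in F 1 -> eqF k x y -> eqF k (fexp F x) (fexp F y).
Proof.
move=> Fx Fy xy; have := eqFW (leqnSn k) (fexp_lipschitz Fx Fy xy).
by move=> /(filtD hF)/(_ xy); rewrite subrK.
Qed.

Lemma fexp_mul1 x y : x \in F 1 -> y \in F 1 -> eqF 1 (fexp F x * fexp F y) 1.
Proof. by move=> Fx Fy; rewrite -[1]mulr1; apply: eqFM; apply: fexp1. Qed.

Lemma fexp_mul_lipschitz k x y x' y' :
  x \in F 1 -> y \in F 1 -> x' \in F 1 -> y' \in F 1 -> eqF k x x' -> eqF k y y' ->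
  eqF k.+1 (fexp F x * fexp F y - fexp F x' * fexp F y') ((x - x') + (y - y')).
Proof.
move=> Fx Fy Fx' Fy' xx' yy'.
have -> : fexp F x * fexp F y - fexp F x' * fexp F y' =
    (fexp F x - fexp F x') * fexp F y + fexp F x' * (fexp F y - fexp F y').
  by rewrite mulrBl mulrBr addrA subrK.
apply: eqFD.
  apply: (@eqF_trans _ _ (fexp F x - fexp F x')); last exact: fexp_lipschitz.
  rewrite /eqF -[X in _ - X]mulr1 -mulrBr -addn1.
  exact: (filtM hF (fexp_eqF Fx Fx' xx') (fexp1 Fy)).
apply: (@eqF_trans _ _ (fexp F y - fexp F y')); last exact: fexp_lipschitz.
rewrite /eqF -[X in _ - X]mul1r -mulrBl -add1n.
exact: (filtM hF (fexp1 Fx') (fexp_eqF Fy Fy' yy')).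
Qed.

Lemma BCH_F1 x y : x \in F 1 -> y \in F 1 -> BCH F x y \in F 1.
Proof. by move=> Fx Fy; rewrite /BCH !filtB ?flog_F1 ?fexp_mul1. Qed.

Lemma BCH_contract k x y x' y' :
  x \in F 1 -> y \in F 1 -> x' \in F 1 -> y' \in F 1 -> eqF k x x' -> eqF k y y' ->
  eqF k.+1 (BCH F x y) (BCH F x' y').
Proof.
move=> Fx Fy Fx' Fy' xx' yy'.
have W := fexp_mul_lipschitz Fx Fy Fx' Fy' xx' yy'.
have ww' : eqF k (fexp F x * fexp F y) (fexp F x' * fexp F y').
  by have := filtD hF (eqFW (leqnSn k) W) (filtD hF xx' yy'); rewrite subrK.
have := eqF_trans (flog_lipschitz (fexp_mul1 Fx Fy) (fexp_mul1 Fx' Fy') ww') W.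
have -> : (x - x') + (y - y') = (x + y) - (x' + y') by rewrite opprD addrACA.
by move=> /eqF_sub_swap; rewrite /BCH -!addrA -!opprD.
Qed.

Lemma Ptilde_homo (theta : K) (Q : {linear A -> A}) :
  (forall n, {homo Q : x / x \in F n}) -> forall n, {homo Ptilde theta Q : x / x \in F n}.
Proof. by move=> FQ n x Fx; rewrite /Ptilde filtB ?filtZ ?FQ. Qed.

Section RotaBaxterExp.
Variables (theta : K) (Q : {linear A -> A}).
Hypothesis FQ : forall n, {homo Q : x / x \in F n}.

Lemma fixed_unique_left b y z : b \in F 1 ->
  y = 1 - Q (y * b) -> z = 1 - Q (z * b) -> y = z.
Proof.
move=> Fb ey ez; apply: (@contractive_fixed_unique 0 (fun y => 1 - Q (y * b)));
  rewrite -?ey -?ez ?filtT //.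
move=> n y1 y2 _ _ e; apply: eqFB (eqF_refl _ _) _.
by rewrite /eqF -linearB -mulrBl FQ // -addn1 (filtM hF e Fb).
Qed.

Lemma fixed_unique_right b y z : b \in F 1 ->
  y = 1 - Q (b * y) -> z = 1 - Q (b * z) -> y = z.
Proof.
move=> Fb ey ez; apply: (@contractive_fixed_unique 0 (fun y => 1 - Q (b * y)));
  rewrite -?ey -?ez ?filtT //.
move=> n y1 y2 _ _ e; apply: eqFB (eqF_refl _ _) _.
by rewrite /eqF -linearB -mulrBr FQ // -add1n (filtM hF Fb e).
Qed.

Hypothesis RB : rota_baxter theta Q.

Lemma rota_baxter_fexp u : u \in F 1 ->
  Q (fexp F (Ptilde theta Q u) - fexp F (- Q u)) = - theta *: (fexp F (- Q u) - 1).
Proof.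
move=> Fu; have Fq : - Q u \in F 1 by rewrite filtN ?FQ.
have Ft : Ptilde theta Q u \in F 1 by apply: Ptilde_homo.
apply: eqF_sep => N.
apply: (@eqF_trans _ _ (Q (tseries (@exp_coef K) N.+1 (Ptilde theta Q u)
                            - tseries (@exp_coef K) N.+1 (- Q u)))).
  rewrite /eqF -linearB FQ //.
  by apply: eqFB; apply: eqFW (leqnSn N) (fexp_trunc _ _).
rewrite rota_baxter_tseries // /exp_coef invr1 scale1r.
apply/eqFZ/eqFB; last exact: eqF_refl.
exact/eqF_sym/(eqFW (leqnSn N))/fexp_trunc.
Qed.

Hypothesis theta_neq0 : theta != 0.

Lemma rota_baxter_fexp_inv u : u \in F 1 ->
  Q (theta^-1 *: (fexp F (Ptilde theta Q u) - fexp F (- Q u))) = 1 - fexp F (- Q u).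
Proof.
move=> Fu; rewrite linearZ /= rota_baxter_fexp //.
by rewrite scalerA mulrN mulVf // scaleN1r opprB.
Qed.

Lemma fexp_left_factor u : u \in F 1 ->
  let b := theta^-1 *: (fexp F (Q u) * fexp F (Ptilde theta Q u) - 1) in
  fexp F (- Q u) = 1 - Q (fexp F (- Q u) * b).
Proof.
move=> Fu b; rewrite /b -scalerAr mulrBr mulr1 mulrA fexpN_mul ?FQ // mul1r.
by rewrite rota_baxter_fexp_inv // subKr.
Qed.

Lemma fexp_right_factor u : u \in F 1 ->
  let b := theta^-1 *: (fexp F (Ptilde theta Q u) * fexp F (Q u) - 1) in
  fexp F (- Q u) = 1 - Q (b * fexp F (- Q u)).
Proof.
move=> Fu b; rewrite /b -scalerAl mulrBl mul1r -mulrA fexp_mulN ?FQ // mulr1.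
by rewrite rota_baxter_fexp_inv // subKr.
Qed.

End RotaBaxterExp.

Section Chi.
Variables (theta : K) (P : {linear A -> A}).
Hypothesis FP : forall n, {homo P : x / x \in F n}.
Variable a : A.
Hypothesis Fa : a \in F 1.

Local Notation c := (chi F theta P a).

Lemma chi_step_F1 x : x \in F 1 -> chi_step F theta P a x \in F 1.
Proof. by move=> Fx; rewrite filtB ?filtZ ?BCH_F1 ?FP ?Ptilde_homo. Qed.

Lemma chi_step_contractive : contractive 1 (chi_step F theta P a).
Proof.
move=> n x y Fx Fy xy; apply/eqFB/eqFZ; first exact: eqF_refl.
apply: BCH_contract; rewrite ?FP ?Ptilde_homo //.
  by rewrite /eqF -linearB FP.
by rewrite /eqF -linearB Ptilde_homo.
Qed.

Lemma chi_fixed : c \in F 1 /\ chi_step F theta P a c = c.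
Proof. exact: contractive_iter_fixed chi_step_contractive chi_step_F1 Fa. Qed.

Hypothesis theta_neq0 : theta != 0.

Lemma chi_factorization : fexp F (theta *: a) = fexp F (P c) * fexp F (Ptilde theta P c).
Proof.
have [Fc fix_c] := chi_fixed.
have PPt : P c + Ptilde theta P c = theta *: c by rewrite /Ptilde addrC subrK.
have -> : theta *: a = theta *: c + BCH F (P c) (Ptilde theta P c).
  by rewrite -{1}fix_c /chi_step scalerBr scalerA mulfV // scale1r subrK.
rewrite /BCH -addrA -opprD PPt subrKC fexp_log //.
by apply: fexp_mul1; rewrite ?FP ?Ptilde_homo.
Qed.

Lemma chi_BCH : c = a + theta^-1 *: BCH F (- P c) (theta *: a).
Proof.
have [Fc _] := chi_fixed.
have PtP : Ptilde theta P c + P c = theta *: c by rewrite /Ptilde subrK.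
rewrite /BCH chi_factorization mulrA fexpN_mul ?FP // mul1r flog_exp ?Ptilde_homo //.
by rewrite opprK PtP -scalerBr scalerA mulVf // scale1r subrKC.
Qed.

End Chi.

End Filtration.

Theorem proposition2p12 (K : fieldType) (charK0 : [pchar K] =i pred0)
  (theta : K) (theta_neq0 : theta != 0)
  (A : unitAlgType K) (P : {linear A -> A}) (F : nat -> {pred A})
  (RB : rota_baxter theta P) (filt : rb_filtration F P)
  (compl : filt_complete F) :
  forall a : A, a \in F 1%N ->
  let c := chi F theta P a in
  let Pt := Ptilde theta P in
  [/\ c = a + theta^-1 *: BCH F (- P c) (theta *: a),
      fexp F (theta *: a) = fexp F (P c) * fexp F (Pt c) &
      let b := theta^-1 *: (fexp F (theta *: a) - 1) in
      let x := (fexp F (P c))^-1 in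
      let x' := (fexp F (Pt c))^-1 in
      [/\ fexp F (P c) \is a GRing.unit /\ fexp F (Pt c) \is a GRing.unit,
          x = 1 - P (x * b), x' = 1 - Pt (b * x'),
          forall y, y = 1 - P (y * b) -> y = x &
          forall y', y' = 1 - Pt (b * y') -> y' = x']].
Proof.
move=> a Fa c Pt.
have hF := rb_filtration_complete filt compl.
have FP : forall n, {homo P : x / x \in F n} by case: filt => _ [].
have FPt := Ptilde_homo hF theta FP.
have [Fc _] := chi_fixed hF theta FP Fa.
have factor := chi_factorization hF charK0 FP Fa theta_neq0.
split=> //; first exact: (chi_BCH hF charK0 FP Fa theta_neq0).
move=> b x x'.
have Fb : b \in F 1 by apply/(filtZ hF)/(fexp1 hF)/(filtZ hF).
have ex : x = fexp F (- P c) by rewrite /x fexpV ?FP.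
have ex' : x' = fexp F (- Pt c) by rewrite /x' fexpV ?FPt.
have eqx : x = 1 - P (x * b).
  by rewrite ex /b factor; apply: fexp_left_factor.
have eqx' : x' = 1 - Pt (b * x').
  have := fexp_right_factor hF charK0 FPt (rota_baxter_Ptilde RB) theta_neq0 Fc.
  by rewrite PtildeK -ex' /b factor.
split=> //; first by split; apply: fexp_unit; rewrite ?FP ?FPt.
- by move=> y ey; apply: (fixed_unique_left hF FP Fb ey eqx).
- by move=> y ey; apply: (fixed_unique_right hF FPt Fb ey eqx').
Qed.
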